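(* Writing $\mathcal{E}=2\mathbb{Z}$, $\mathcal{O}=2\mathbb{Z}+1$, define subsets of $\mathbb{Z}^4$ (elements $(a,b,c,d)$): $X_1=\{b\in\mathcal{O},\ c\in2\mathcal{O},\ d\in4\mathcal{E}\}$, $X_2=\{b\in\mathcal{O},\ c\in2\mathcal{O},\ d\in4\mathcal{O}\}$, $X_3=\{a\in\mathcal{O},\ b,c\in\mathcal{E},\ d\in2\mathcal{O}\}$, $X_1'=\{c\in\mathcal{O},\ b\in2\mathcal{O},\ a\in4\mathcal{E}\}$, $X_1''=\{b+c\in\mathcal{O},\ a+c\in2\mathcal{E},\ a+b+c+d\in4\mathcal{E}\}$, $X_2'=\{c\in\mathcal{O},\ b\in2\mathcal{O},\ a\in4\mathcal{O}\}$, $X_2''=\{b+c\in\mathcal{O},\ a+c\in2\mathcal{E},\ a+b+c+d\in4\mathcal{O}\}$, $X_3'=\{d\in\mathcal{O},\ b,c\in\mathcal{E},\ a\in2\mathcal{O}\}$, $X_3''=\{a,b,c,d\in\mathcal{O},\ a+b+c+d\in2\mathcal{O}\}$. Then $\{x\in\mathbb{Z}^4: P(x)\equiv4\pmod{32}\}=X_1\sqcup X_1'\sqcup X_1''$ and $\{x\in\mathbb{Z}^4: P(x)\equiv20\pmod{32}\}=X_2\sqcup X_2'\sqcup X_2''\sqcup X_3\sqcup X_3'\sqcup X_3''$ (disjoint unions).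
   Context: For $x=(a,b,c,d)\in\mathbb{Z}^4$, $P(x)=b^2c^2+18abcd-4ac^3-4b^3d-27a^2d^2$ (discriminant of the binary cubic form $au^3+bu^2v+cuv^2+dv^3$). For a set $S\subset\mathbb{Z}$ and $k\in\mathbb{Z}$, $kS=\{ks: s\in S\}$. *)

From Stdlib Require Import ZArith List.
Import ListNotations.
Open Scope Z_scope.

Definition Z4 : Type := (Z * Z * Z * Z)%type.

(* discriminant of the binary cubic form a u^3 + b u^2 v + c u v^2 + d v^3 *)
Definition P (x : Z4) : Z :=
  let '(a, b, c, d) := x in
  b^2*c^2 + 18*a*b*c*d - 4*a*c^3 - 4*b^3*d - 27*a^2*d^2.

Definition Ev (s : Z) : Prop := exists t, s = 2*t.
Definition Od (s : Z) : Prop := exists t, s = 2*t + 1.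
Definition scal (k : Z) (S : Z -> Prop) (x : Z) : Prop := exists s, S s /\ x = k*s.

Definition X1 (x : Z4) : Prop := let '(a,b,c,d) := x in
  Od b /\ scal 2 Od c /\ scal 4 Ev d.
Definition X2 (x : Z4) : Prop := let '(a,b,c,d) := x in
  Od b /\ scal 2 Od c /\ scal 4 Od d.
Definition X3 (x : Z4) : Prop := let '(a,b,c,d) := x in
  Od a /\ Ev b /\ Ev c /\ scal 2 Od d.
Definition X1' (x : Z4) : Prop := let '(a,b,c,d) := x in
  Od c /\ scal 2 Od b /\ scal 4 Ev a.
Definition X1'' (x : Z4) : Prop := let '(a,b,c,d) := x in
  Od (b+c) /\ scal 2 Ev (a+c) /\ scal 4 Ev (a+b+c+d).
Definition X2' (x : Z4) : Prop := let '(a,b,c,d) := x in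
  Od c /\ scal 2 Od b /\ scal 4 Od a.
Definition X2'' (x : Z4) : Prop := let '(a,b,c,d) := x in
  Od (b+c) /\ scal 2 Ev (a+c) /\ scal 4 Od (a+b+c+d).
Definition X3' (x : Z4) : Prop := let '(a,b,c,d) := x in
  Od d /\ Ev b /\ Ev c /\ scal 2 Od a.
Definition X3'' (x : Z4) : Prop := let '(a,b,c,d) := x in
  Od a /\ Od b /\ Od c /\ Od d /\ scal 2 Od (a+b+c+d).

Definition disjoint_union (S : Z4 -> Prop) (L : list (Z4 -> Prop)) : Prop :=
  (forall x, S x <-> Exists (fun X => X x) L) /\
  ForallOrdPairs (fun X Y => forall x, ~ (X x /\ Y x)) L.

(* P(x) mod 32 depends only on x mod 16: shifting one coordinate by 16 changes the
   discriminant by a multiple of 32.  Each of the nine sets is cut out by congruences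
   modulo 2, 4 or 8 of sums of coordinates, so it is 16-periodic as well.  Both
   decompositions are therefore statements about (Z/16)^4, checked by computation. *)
From Stdlib Require Import ZArith List Lia Bool.
Import ListNotations.
Open Scope Z_scope.

Lemma scal_Od_mod (k s : Z) : 0 < k -> scal k Od s <-> s mod (2 * k) = k.
Proof.
  intros Hk; split.
  - intros [t [[u ->] ->]].
    symmetry; apply Z.mod_unique with u; [lia | ring].
  - intros Hs; exists (2 * (s / (2 * k)) + 1); split.
    + now exists (s / (2 * k)).
    + rewrite (Z_div_mod_eq_full s (2 * k)) at 1; rewrite Hs; ring.
Qed.

Lemma scal_Ev_mod (k s : Z) : 0 < k -> scal k Ev s <-> s mod (2 * k) = 0.
Proof.
  intros Hk; split.
  - intros [t [[u ->] ->]].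
    symmetry; apply Z.mod_unique with u; [lia | ring].
  - intros Hs; exists (2 * (s / (2 * k))); split.
    + now exists (s / (2 * k)).
    + rewrite (Z_div_mod_eq_full s (2 * k)) at 1; rewrite Hs; ring.
Qed.

Lemma scal1 (S : Z -> Prop) (s : Z) : scal 1 S s <-> S s.
Proof.
  split.
  - intros [t [Ht ->]]; now rewrite Z.mul_1_l.
  - intros Hs; exists s; split; [exact Hs | ring].
Qed.

Lemma Od_mod (s : Z) : Od s <-> s mod 2 = 1.
Proof. rewrite <- scal1; exact (scal_Od_mod 1 s ltac:(lia)). Qed.

Lemma Ev_mod (s : Z) : Ev s <-> s mod 2 = 0.
Proof. rewrite <- scal1; exact (scal_Ev_mod 1 s ltac:(lia)). Qed.

Lemma P_rev (a b c d : Z) : P (a, b, c, d) = P (d, c, b, a).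
Proof. unfold P; ring. Qed.

Lemma P_shift_a (q a b c d : Z) : P (16 * q + a, b, c, d) mod 32 = P (a, b, c, d) mod 32.
Proof.
  replace (P (16 * q + a, b, c, d)) with
    (P (a, b, c, d) + (9*q*b*c*d - 2*q*c^3 - 27*a*q*d^2 - 216*q^2*d^2) * 32) by (unfold P; ring).
  apply Z.mod_add; lia.
Qed.

Lemma P_shift_b (q a b c d : Z) : P (a, 16 * q + b, c, d) mod 32 = P (a, b, c, d) mod 32.
Proof.
  replace (P (a, 16 * q + b, c, d)) with
    (P (a, b, c, d)
     + ((b*q + 8*q^2)*c^2 + 9*a*q*c*d - (6*b^2*q + 96*b*q^2 + 512*q^3)*d) * 32)
    by (unfold P; ring).
  apply Z.mod_add; lia.
Qed.

Lemma P_shift16 (qa qb qc qd a b c d : Z) :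
  P (16 * qa + a, 16 * qb + b, 16 * qc + c, 16 * qd + d) mod 32 = P (a, b, c, d) mod 32.
Proof.
  (* the reversal symmetry turns the shifts of d and c into shifts of a and b *)
  rewrite P_shift_a, P_rev, P_shift_a, P_rev, P_shift_b, P_rev, P_shift_b, P_rev.
  reflexivity.
Qed.

Definition red16 (x : Z4) : Z4 :=
  let '(a, b, c, d) := x in (a mod 16, b mod 16, c mod 16, d mod 16).

Lemma P_red16 (x : Z4) : P (red16 x) mod 32 = P x mod 32.
Proof.
  destruct x as [[[a b] c] d]; cbn [red16].
  rewrite <- (P_shift16 (a / 16) (b / 16) (c / 16) (d / 16)).
  now rewrite <- !Z_div_mod_eq_full.
Qed.

Definition decides (X : Z4 -> Prop) (f : Z4 -> bool) : Prop := forall x, X x <-> f x = true.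

Fixpoint pairwise_disjointb (bs : list bool) : bool :=
  match bs with
  | [] => true
  | b :: bs => negb (b && existsb id bs) && pairwise_disjointb bs
  end.

Definition disjoint_unionb (s : bool) (bs : list bool) : bool :=
  Bool.eqb s (existsb id bs) && pairwise_disjointb bs.

Lemma Exists_existsb (L : list (Z4 -> Prop)) (Lb : list (Z4 -> bool)) (x : Z4) :
  Forall2 decides L Lb ->
  (Exists (fun X => X x) L <-> existsb id (map (fun f => f x) Lb) = true).
Proof.
  induction 1 as [| X f L Lb HXf _ IH]; cbn.
  - split; [now intros H; inversion H | discriminate].
  - rewrite Exists_cons, orb_true_iff, IH, (HXf x); reflexivity.
Qed.

Lemma ForallOrdPairs_disjointb (L : list (Z4 -> Prop)) (Lb : list (Z4 -> bool)) :
  Forall2 decides L Lb ->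
  (forall x, pairwise_disjointb (map (fun f => f x) Lb) = true) ->
  ForallOrdPairs (fun X Y => forall x, ~ (X x /\ Y x)) L.
Proof.
  induction 1 as [| X f L Lb HXf HL IH]; intros Hdisj; constructor.
  - apply Forall_forall; intros Y HY x [HXx HYx].
    specialize (Hdisj x); cbn in Hdisj.
    apply andb_true_iff in Hdisj as [Hdisj _].
    apply (HXf x) in HXx.
    assert (Hex : existsb id (map (fun f => f x) Lb) = true)
      by (apply (Exists_existsb L); [| apply Exists_exists; exists Y]; auto).
    rewrite HXx, Hex in Hdisj; discriminate.
  - apply IH; intros x; specialize (Hdisj x); cbn in Hdisj.
    now apply andb_true_iff in Hdisj as [_ Hdisj].
Qed.

Lemma disjoint_union_reflect (S : Z4 -> Prop) (s : Z4 -> bool)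
    (L : list (Z4 -> Prop)) (Lb : list (Z4 -> bool)) :
  decides S s -> Forall2 decides L Lb ->
  (forall x, disjoint_unionb (s x) (map (fun f => f x) Lb) = true) ->
  disjoint_union S L.
Proof.
  intros HS HL Hcheck; split.
  - intros x; specialize (Hcheck x); apply andb_true_iff in Hcheck as [Heq _].
    apply Bool.eqb_prop in Heq.
    now rewrite (HS x), (Exists_existsb L Lb x HL), Heq.
  - apply (ForallOrdPairs_disjointb L Lb HL); intros x.
    specialize (Hcheck x); now apply andb_true_iff in Hcheck as [_ Hdisj].
Qed.

Definition X1b (x : Z4) : bool := let '(a, b, c, d) := x in
  (b mod 2 =? 1) && (c mod 4 =? 2) && (d mod 8 =? 0).
Definition X2b (x : Z4) : bool := let '(a, b, c, d) := x in
  (b mod 2 =? 1) && (c mod 4 =? 2) && (d mod 8 =? 4).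
Definition X3b (x : Z4) : bool := let '(a, b, c, d) := x in
  (a mod 2 =? 1) && (b mod 2 =? 0) && (c mod 2 =? 0) && (d mod 4 =? 2).
Definition X1'b (x : Z4) : bool := let '(a, b, c, d) := x in
  (c mod 2 =? 1) && (b mod 4 =? 2) && (a mod 8 =? 0).
Definition X1''b (x : Z4) : bool := let '(a, b, c, d) := x in
  ((b + c) mod 2 =? 1) && ((a + c) mod 4 =? 0) && ((a + b + c + d) mod 8 =? 0).
Definition X2'b (x : Z4) : bool := let '(a, b, c, d) := x in
  (c mod 2 =? 1) && (b mod 4 =? 2) && (a mod 8 =? 4).
Definition X2''b (x : Z4) : bool := let '(a, b, c, d) := x in
  ((b + c) mod 2 =? 1) && ((a + c) mod 4 =? 0) && ((a + b + c + d) mod 8 =? 4).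
Definition X3'b (x : Z4) : bool := let '(a, b, c, d) := x in
  (d mod 2 =? 1) && (b mod 2 =? 0) && (c mod 2 =? 0) && (a mod 4 =? 2).
Definition X3''b (x : Z4) : bool := let '(a, b, c, d) := x in
  (a mod 2 =? 1) && (b mod 2 =? 1) && (c mod 2 =? 1) && (d mod 2 =? 1)
  && ((a + b + c + d) mod 4 =? 2).

Ltac decide_membership :=
  intros [[[a b] c] d]; cbn;
  rewrite ?Od_mod, ?Ev_mod, ?scal_Od_mod, ?scal_Ev_mod by lia;
  rewrite ?andb_true_iff, ?Z.eqb_eq; cbn; tauto.

Lemma X1_spec : decides X1 X1b. Proof. decide_membership. Qed.
Lemma X2_spec : decides X2 X2b. Proof. decide_membership. Qed.
Lemma X3_spec : decides X3 X3b. Proof. decide_membership. Qed.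
Lemma X1'_spec : decides X1' X1'b. Proof. decide_membership. Qed.
Lemma X1''_spec : decides X1'' X1''b. Proof. decide_membership. Qed.
Lemma X2'_spec : decides X2' X2'b. Proof. decide_membership. Qed.
Lemma X2''_spec : decides X2'' X2''b. Proof. decide_membership. Qed.
Lemma X3'_spec : decides X3' X3'b. Proof. decide_membership. Qed.
Lemma X3''_spec : decides X3'' X3''b. Proof. decide_membership. Qed.

Definition classes_check (x : Z4) : bool :=
  disjoint_unionb (P x mod 32 =? 4) [X1b x; X1'b x; X1''b x] &&
  disjoint_unionb (P x mod 32 =? 20) [X2b x; X2'b x; X2''b x; X3b x; X3'b x; X3''b x].

Lemma classes_check_red16 (x : Z4) : classes_check (red16 x) = classes_check x.
Proof.
  unfold classes_check; rewrite P_red16.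
  destruct x as [[[a b] c] d]; cbn [red16 X1b X1'b X1''b X2b X2'b X2''b X3b X3'b X3''b].
  repeat (f_equal; try (Z.div_mod_to_equations; lia)).
Qed.

Definition residues16 : list Z := map Z.of_nat (seq 0 16).

Definition box16 : list Z4 :=
  list_prod (list_prod (list_prod residues16 residues16) residues16) residues16.

Lemma red16_in_box16 (x : Z4) : In (red16 x) box16.
Proof.
  assert (Hres : forall z, In (z mod 16) residues16).
  { intros z; unfold residues16.
    replace (z mod 16) with (Z.of_nat (Z.to_nat (z mod 16))) by (Z.div_mod_to_equations; lia).
    apply in_map, in_seq; Z.div_mod_to_equations; lia. }
  destruct x as [[[a b] c] d]; cbn [red16].
  now repeat apply in_prod.
Qed.

Lemma classes_check_box16 : forallb classes_check box16 = true.
Proof. vm_compute; reflexivity. Qed.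

Lemma classes_check_all (x : Z4) : classes_check x = true.
Proof.
  rewrite <- classes_check_red16.
  exact (proj1 (forallb_forall _ _) classes_check_box16 _ (red16_in_box16 x)).
Qed.

Theorem lemma2p6 :
  disjoint_union (fun x => P x mod 32 = 4) [X1; X1'; X1''] /\
  disjoint_union (fun x => P x mod 32 = 20) [X2; X2'; X2''; X3; X3'; X3''].
Proof.
  split.
  - apply (disjoint_union_reflect _ (fun x => P x mod 32 =? 4) _ [X1b; X1'b; X1''b]).
    + intros x; symmetry; apply Z.eqb_eq.
    + repeat apply Forall2_cons; try apply Forall2_nil.
      all: [> exact X1_spec | exact X1'_spec | exact X1''_spec ].
    + intros x; exact (proj1 (andb_prop _ _ (classes_check_all x))).
  - apply (disjoint_union_reflect _ (fun x => P x mod 32 =? 20) _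
             [X2b; X2'b; X2''b; X3b; X3'b; X3''b]).
    + intros x; symmetry; apply Z.eqb_eq.
    + repeat apply Forall2_cons; try apply Forall2_nil.
      all: [> exact X2_spec | exact X2'_spec | exact X2''_spec
             | exact X3_spec | exact X3'_spec | exact X3''_spec ].
    + intros x; exact (proj2 (andb_prop _ _ (classes_check_all x))).
Qed.
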